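(* Let $X$ be a nonempty set and let $S$ be a regular semigroup together with a one-to-one mapping $\phi:X\to E(S)$ such that $S$ has no proper regular subsemigroup containing $X\phi$. Then there is a surjective semigroup homomorphism $\psi:FT(X)\to S$ with $[x]\psi=x\phi$ for all $x\in X$.
   Context: Let $1$ be a symbol not in $X$. Elements of height $\ge 2$ are triples $g=(g^l,g^c,g^r)$. Set $\Gamma_0(X)=\{1\}$, $\Gamma_1(X)=X$, and identify each $x\in X$ with $(1,x,1)$ (so $x^l=x^r=1$). For $i\ge 2$, $\Gamma_i(X)$ is the set of triples $g\in\Gamma_{i-1}(X)\times\Gamma_{i-2}(X)\times\Gamma_{i-1}(X)$ with $g^l\neq g^r$ and $g^c\in\{(g^l)^l,(g^l)^r\}\cap\{(g^r)^l,(g^r)^r\}$. Let $\Gamma(X)=\bigcup_{i\ge0}\Gamma_i(X)$ (height of $g$ = the $i$ with $g\in\Gamma_i(X)$). Let $\rho$ be the smallest congruence on the free semigroup $\Gamma(X)^+$ containing $(1g,g),(g1,g),(gg,g)$ for all $g\in\Gamma(X)$, and $(g^cg^lg,g)$, $(gg^rg^c,g)$, $(g^rg^cgg^cg^l,\,g^rg^cg^l)$ for all $g$ of height $\ge2$. $FT^1(X)=\Gamma(X)^+/\rho$ with $[u]$ the class of $u$, and $FT(X)=FT^1(X)\setminus\{[1]\}$. $E(S)$ denotes the set of idempotents of $S$. *)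

From Stdlib Require Import List.
Import ListNotations.
Set Implicit Arguments.

(** Elements of Gamma(X) as trees: [one] is the symbol 1, [gen x] is x
    (identified with the triple (1,x,1)), [tri l c r] is the triple (l,c,r). *)
Inductive Gam (X : Type) : Type :=
| one : Gam X
| gen : X -> Gam X
| tri : Gam X -> Gam X -> Gam X -> Gam X.
Arguments one {X}.

(* g^l, g^c, g^r ; for x in X, x^l = x^r = 1. *)
Definition gl {X} (g : Gam X) : Gam X :=
  match g with tri l _ _ => l | _ => one end.
Definition gr {X} (g : Gam X) : Gam X :=
  match g with tri _ _ r => r | _ => one end.
Definition gc {X} (g : Gam X) : Gam X :=
  match g with tri _ c _ => c | gen x => gen x | one => one end.

Fixpoint inGam {X} (i : nat) (g : Gam X) : Prop :=
  match i with
  | 0 => g = one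
  | S k =>
    match k with
    | 0 => exists x, g = gen x
    | S j => exists l c r, g = tri l c r /\ inGam k l /\ inGam j c /\
               inGam k r /\ l <> r /\
               (c = gl l \/ c = gr l) /\ (c = gl r \/ c = gr r)
    end
  end.

Definition inGamma {X} (g : Gam X) : Prop := exists i, inGam i g.
Definition height_ge2 {X} (g : Gam X) : Prop := exists i, 2 <= i /\ inGam i g.

(** Elements of the free semigroup Gamma(X)^+ : nonempty words over Gamma(X). *)
Definition word {X} (u : list (Gam X)) : Prop := u <> [] /\ Forall inGamma u.

Inductive rgen {X} : list (Gam X) -> list (Gam X) -> Prop :=
| rg_1l g : inGamma g -> rgen [one; g] [g]
| rg_1r g : inGamma g -> rgen [g; one] [g]
| rg_sq g : inGamma g -> rgen [g; g] [g]
| rg_cl g : height_ge2 g -> rgen [gc g; gl g; g] [g]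
| rg_rc g : height_ge2 g -> rgen [g; gr g; gc g] [g]
| rg_5 g : height_ge2 g ->
    rgen [gr g; gc g; g; gc g; gl g] [gr g; gc g; gl g].

(** rho : the smallest congruence on Gamma(X)^+ containing the generating
    pairs (equivalence closure of their closure under two-sided contexts). *)
Inductive rho {X} : list (Gam X) -> list (Gam X) -> Prop :=
| rho_refl u : word u -> rho u u
| rho_step p q a b : Forall inGamma p -> Forall inGamma q -> rgen a b ->
    rho (p ++ a ++ q) (p ++ b ++ q)
| rho_sym u v : rho u v -> rho v u
| rho_trans u v w : rho u v -> rho v w -> rho u w.

(** FT^1(X) = Gamma(X)^+ / rho : the rho-classes, as predicates on words. *)
Definition FT1 (X : Type) : Type :=
  { C : list (Gam X) -> Prop | exists u, word u /\ C = rho u }.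

Definition cls {X} (C : FT1 X) : list (Gam X) -> Prop := proj1_sig C.

(** Multiplication in FT^1(X), relationally: [E = C D] iff E contains u v for
    some u in C and v in D (i.e. E = [uv] with C = [u], D = [v]). *)
Definition is_prod {X} (C D E : FT1 X) : Prop :=
  exists u v, cls C u /\ cls D v /\ cls E (u ++ v).

(** FT(X) = FT^1(X) \ {[1]} *)
Definition inFT {X} (C : FT1 X) : Prop := cls C <> rho [one].

Lemma word_gen {X} (x : X) : word [gen x].
Proof.
  split; [discriminate|]. constructor; [|constructor]. exists 1. simpl. eauto.
Qed.

Definition cls_gen {X} (x : X) : FT1 X :=
  exist _ (rho [gen x]) (ex_intro _ [gen x] (conj (word_gen x) eq_refl)).

Definition associative_op {S} (mul : S -> S -> S) : Prop :=
  forall a b c, mul a (mul b c) = mul (mul a b) c.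
Definition regular_sg {S} (mul : S -> S -> S) : Prop :=
  forall a, exists b, mul (mul a b) a = a.
Definition idempotent {S} (mul : S -> S -> S) (e : S) : Prop := mul e e = e.
Definition regular_subsemigroup {S} (mul : S -> S -> S) (T : S -> Prop) : Prop :=
  (forall a b, T a -> T b -> T (mul a b)) /\
  (forall a, T a -> exists b, T b /\ mul (mul a b) a = a).

From Stdlib Require Import List Lia Setoid Classical ClassicalEpsilon.
From Stdlib Require Import FunctionalExtensionality PropExtensionality.
Import ListNotations.
Set Implicit Arguments.
Unset Strict Implicit.

(* Work in S^1 = S + {1}. Send 1 to 1, x to xφ, and a triple g = (l, c, r) to the sandwich
   element K E z F K, where E, K, F are the images of l, c, r and z is an inverse of F K E.
   By induction on the height these images are idempotents with E K E = E and F K F = F, and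
   then every generating pair of ρ holds in S^1, so ψ is a homomorphism on FT(X).

   For surjectivity it suffices that the image of Γ(X)^+ is a regular subsemigroup. Call a
   word a mountain if it first climbs (each letter is a child, g^l or g^r, of the next) and
   then descends. Since p q p = p whenever q is a child of p, the reversed mountain is an
   inverse of the mountain. Every product equals the product along a mountain. The key step
   puts a parent r of x in front of a mountain x p ...: either r = p and r x p = p, or
   r x p = r t p for the new triple t = (p, x, r), a parent of p onto which r then climbs.
   An arbitrary letter g is put in front by climbing from a generator x to the first letter,
   passing to another generator y through (x, 1, y), and prepending a descent from g to y. *)

(* [rewrite_in_context mulA H] rewrites with [H : L = R] also inside left-nested products
   [w * L], i.e. modulo associativity. *)
Ltac rewrite_in_context mulA H :=
  let H0 := fresh in
  let H' := fresh in
  pose proof H as H0; rewrite ?mulA in H0;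
  lazymatch type of H0 with
  | ?op ?a ?b = ?R =>
      assert (H' : forall w, op w (op a b) = op w R) by (intro; rewrite H0; reflexivity);
      repeat setoid_rewrite mulA in H';
      rewrite ?mulA; repeat first [rewrite H' | rewrite H0]; clear H0 H'
  end.

Section RegularInverse.
Variables (M : Type) (mul : M -> M -> M).
Local Infix "*" := mul.
Hypotheses (mulA : associative_op mul) (mul_regular : regular_sg mul).

Definition inverse (a : M) : M :=
  let b := proj1_sig (constructive_indefinite_description _ (mul_regular a)) in b * a * b.

Lemma mul_inverse_mul a : a * inverse a * a = a.
Proof.
  unfold inverse. destruct (constructive_indefinite_description _ _) as [b Hb]; simpl.
  rewrite_in_context mulA Hb. reflexivity.
Qed.

Lemma inverse_mul_inverse a : inverse a * a * inverse a = inverse a.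
Proof.
  unfold inverse. destruct (constructive_indefinite_description _ _) as [b Hb]; simpl.
  rewrite_in_context mulA Hb. reflexivity.
Qed.

End RegularInverse.

Section Sandwich.
Variables (M : Type) (mul : M -> M -> M).
Local Infix "*" := mul.
Hypothesis mulA : associative_op mul.
Variables K E F z : M.
Hypotheses (K_idem : K * K = K) (EKE : E * K * E = E) (FKF : F * K * F = F)
  (z_inner : F * K * E * z * (F * K * E) = F * K * E)
  (z_outer : z * (F * K * E) * z = z).

Definition sandwich : M := K * E * z * F * K.

Lemma sandwich_idem : sandwich * sandwich = sandwich.
Proof.
  unfold sandwich. rewrite_in_context mulA K_idem. rewrite_in_context mulA z_outer. reflexivity.
Qed.

Lemma sandwich_KE_absorb : K * E * sandwich = sandwich.
Proof. unfold sandwich. rewrite_in_context mulA EKE. reflexivity. Qed.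

Lemma sandwich_FK_absorb : sandwich * F * K = sandwich.
Proof. unfold sandwich. rewrite_in_context mulA FKF. reflexivity. Qed.

Lemma sandwich_E_sandwich : sandwich * E * sandwich = sandwich.
Proof.
  unfold sandwich. rewrite_in_context mulA EKE. rewrite_in_context mulA z_outer. reflexivity.
Qed.

Lemma sandwich_F_sandwich : sandwich * F * sandwich = sandwich.
Proof.
  unfold sandwich. rewrite_in_context mulA FKF. rewrite_in_context mulA z_outer. reflexivity.
Qed.

Lemma F_sandwich_E : F * sandwich * E = F * K * E.
Proof. unfold sandwich. rewrite_in_context mulA z_inner. reflexivity. Qed.

Lemma FK_sandwich_KE : F * K * sandwich * K * E = F * K * E.
Proof.
  unfold sandwich. rewrite_in_context mulA K_idem. rewrite_in_context mulA z_inner. reflexivity.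
Qed.

End Sandwich.

Section AdjoinIdentity.
Variables (S : Type) (mul : S -> S -> S).

Definition mul1 (a b : option S) : option S :=
  match a, b with
  | None, _ => b
  | _, None => a
  | Some x, Some y => Some (mul x y)
  end.

Lemma mul1_None_r a : mul1 a None = a.
Proof. destruct a; reflexivity. Qed.

Lemma mul1_eq_None a b : mul1 a b = None -> a = None /\ b = None.
Proof. destruct a, b; easy. Qed.

Lemma mul1A : associative_op mul -> associative_op mul1.
Proof. intros mulA [a|] [b|] [c|]; simpl; rewrite ?mulA; reflexivity. Qed.

Lemma mul1_regular : regular_sg mul -> regular_sg mul1.
Proof.
  intros mul_regular [a|].
  - destruct (mul_regular a) as [b Hb]. exists (Some b). simpl. now rewrite Hb.
  - exists None. reflexivity.
Qed.

End AdjoinIdentity.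

Lemma last_cons A (d a : A) l : last (a :: l) d = last l a.
Proof.
  revert a d; induction l as [|b l IH]; intros a d; [reflexivity |].
  change (last (a :: b :: l) d) with (last (b :: l) d). now rewrite !IH.
Qed.

Section Gamma.
Context {X : Type}.
Implicit Types (g h l c r p q : Gam X) (u v w : list (Gam X)).

Definition child q p : Prop := q = gl p \/ q = gr p.
Definition parent p q : Prop := child q p.
Definition proper g : Prop := exists i, inGam (S i) g.

Fixpoint height g : nat :=
  match g with
  | one => 0
  | gen _ => 1
  | tri l _ _ => S (height l)
  end.

Lemma inGam_tri_inv i l c r : inGam i (tri l c r) ->
  exists j, i = S (S j) /\ inGam (S j) l /\ inGam j c /\ inGam (S j) r /\
    l <> r /\ child c l /\ child c r.
Proof.
  destruct i as [|[|j]]; simpl; [discriminate | intros [x H]; discriminate |].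
  intros (l' & c' & r' & H & Hl & Hc & Hr & Hlr & Hcl & Hcr).
  injection H as <- <- <-. exists j. unfold child. auto 10.
Qed.

Lemma inGam_height g : forall i, inGam i g -> i = height g.
Proof.
  induction g as [|x|l IHl c _ r _]; intros i H.
  - destruct i as [|[|i]]; simpl in H; [reflexivity | destruct H; discriminate |].
    destruct H as (l & c & r & H & _); discriminate.
  - destruct i as [|[|i]]; simpl in H; [discriminate | reflexivity |].
    destruct H as (l & c & r & H & _); discriminate.
  - destruct (inGam_tri_inv H) as (j & -> & Hl & _). simpl. now rewrite <- (IHl _ Hl).
Qed.

Lemma inGam_child i p q : inGam (S i) p -> child q p -> inGam i q.
Proof.
  destruct i as [|i]; simpl.
  - intros [x ->] [-> | ->]; reflexivity.
  - intros (l & c & r & -> & Hl & _ & Hr & _) [-> | ->]; assumption.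
Qed.

Lemma proper_gen (x : X) : proper (gen x).
Proof. exists 0. simpl. eauto. Qed.

Lemma proper_inGamma g : proper g -> inGamma g.
Proof. intros [i H]. now exists (S i). Qed.

Lemma inGamma_cases g : inGamma g -> g = one \/ proper g.
Proof. intros [[|i] H]; [now left | right; now exists i]. Qed.

Lemma proper_tri l c r : proper l -> proper r -> child c l -> child c r -> l <> r ->
  proper (tri l c r).
Proof.
  intros [i Hl] [j Hr] Hcl Hcr Hlr.
  pose proof (inGam_child Hl Hcl) as Hci. pose proof (inGam_child Hr Hcr) as Hcj.
  assert (i = j) as <- by (rewrite (inGam_height Hci), (inGam_height Hcj); reflexivity).
  exists (S i). simpl. exists l, c, r. auto 10.
Qed.

Lemma height_ge2_tri g : height_ge2 g -> exists l c r, g = tri l c r /\ inGamma g.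
Proof.
  intros [[|[|j]] [Hj Hg]]; [lia | lia |].
  pose proof Hg as (l & c & r & -> & _).
  exists l, c, r. split; [reflexivity | now exists (S (S j))].
Qed.

Inductive chain (R : Gam X -> Gam X -> Prop) : list (Gam X) -> Prop :=
| chain_single g : proper g -> chain R [g]
| chain_cons g h w : proper g -> R g h -> chain R (h :: w) -> chain R (g :: h :: w).

Inductive mountain : list (Gam X) -> Prop :=
| mountain_descent w : chain parent w -> mountain w
| mountain_climb x p w : proper x -> child x p -> mountain (p :: w) -> mountain (x :: p :: w).

Lemma chain_proper R w : chain R w -> Forall proper w.
Proof. induction 1; auto. Qed.

Lemma mountain_proper w : mountain w -> Forall proper w.
Proof. induction 1; eauto using chain_proper. Qed.

Lemma mountain_nil : ~ mountain [].
Proof. intros H. inversion H as [w Hw |]. inversion Hw. Qed.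

Lemma chain_app R a L b w : chain R (a :: L) -> R (last L a) b -> chain R (b :: w) ->
  chain R (a :: L ++ b :: w).
Proof.
  revert a; induction L as [|h L IH]; intros a Ha Hab Hb; simpl.
  - inversion Ha. now constructor.
  - inversion Ha; subst. rewrite last_cons in Hab. constructor; auto.
Qed.

Lemma mountain_app_ascent a L w : chain child (a :: L) -> mountain (last L a :: w) ->
  mountain (a :: L ++ w).
Proof.
  revert a; induction L as [|h L IH]; intros a Ha Hw; simpl; [exact Hw |].
  inversion Ha; subst. rewrite last_cons in Hw. apply mountain_climb; auto.
Qed.

Lemma tri_parts_inGamma l c r : inGamma (tri l c r) -> inGamma l /\ inGamma c /\ inGamma r.
Proof.
  intros [i Hi]. destruct (inGam_tri_inv Hi) as (j & _ & Hl & Hc & Hr & _).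
  split; [|split]; eexists; eassumption.
Qed.

Lemma inGamma_one : inGamma (@one X).
Proof. now exists 0. Qed.

Lemma word_one : word [@one X].
Proof. split; [discriminate | auto using inGamma_one]. Qed.

Lemma rgen_words (a b : list (Gam X)) : rgen a b -> word a /\ word b.
Proof.
  destruct 1 as [g Hg|g Hg|g Hg|g Hg|g Hg|g Hg];
    try (destruct (height_ge2_tri Hg) as (l & c & r & -> & Ht);
         destruct (tri_parts_inGamma Ht) as (Hl & Hc & Hr); cbn [gl gc gr]);
    split; split; try discriminate; repeat constructor; auto using inGamma_one.
Qed.

Lemma rho_words u v : rho u v -> word u /\ word v.
Proof.
  induction 1 as [u Hu | p q a b Hp Hq Hab | |]; try tauto.
  destruct (rgen_words Hab) as [[Ha Ha'] [Hb Hb']].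
  split; split; try (destruct p; [destruct a, b | ]; easy);
    apply Forall_app; split; auto; apply Forall_app; split; auto.
Qed.

Lemma rho_class_eq u v : rho u v -> rho u = rho v.
Proof.
  intros Huv. apply functional_extensionality; intros w. apply propositional_extensionality.
  split; intros H; [apply rho_trans with u; [apply rho_sym|] | apply rho_trans with v]; assumption.
Qed.

End Gamma.

Section Psi.
Variables (X Sg : Type) (mul : Sg -> Sg -> Sg).
Hypotheses (mulA : associative_op mul) (mul_regular : regular_sg mul).
Variable phi : X -> Sg.
Hypothesis phi_idem : forall x, idempotent mul (phi x).
Implicit Types (g h l c r p q : Gam X) (u v w : list (Gam X)).

Local Infix "*" := (mul1 mul).
Let mul1_assoc : associative_op (mul1 mul) := mul1A mulA.
Ltac rw H := rewrite_in_context mul1_assoc H.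

Fixpoint psi g : option Sg :=
  match g with
  | one => None
  | gen x => Some (phi x)
  | tri l c r => sandwich (mul1 mul) (psi c) (psi l) (psi r)
                   (inverse (mul1_regular mul_regular) (psi r * psi c * psi l))
  end.

Definition Psi w : option Sg := fold_right (fun g a => psi g * a) None w.

Lemma Psi_cons g w : Psi (g :: w) = psi g * Psi w.
Proof. reflexivity. Qed.

Lemma Psi_app u v : Psi (u ++ v) = Psi u * Psi v.
Proof. induction u as [|g u IH]; simpl; [reflexivity |]. now rewrite IH, mul1_assoc. Qed.

Lemma Psi_single g : Psi [g] = psi g.
Proof. apply mul1_None_r. Qed.

Lemma psi_idem_child g : inGamma g ->
  psi g * psi g = psi g /\ forall q, child q g -> psi g * psi q * psi g = psi g.
Proof.
  intros [i Hg]; revert i Hg; induction g as [|x|l IHl c IHc r IHr]; intros i Hg.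
  - split; [reflexivity|]. intros q [-> | ->]; reflexivity.
  - assert (Hx : Some (phi x) * Some (phi x) = Some (phi x)) by (simpl; now rewrite phi_idem).
    split; [exact Hx|]. intros q [-> | ->]; simpl; exact Hx.
  - destruct (inGam_tri_inv Hg) as (j & -> & Hl & Hc & Hr & _ & Hcl & Hcr).
    destruct (IHl _ Hl) as [_ El], (IHc _ Hc) as [Kc _], (IHr _ Hr) as [_ Fr].
    split; cbn [psi].
    + eapply sandwich_idem; eauto using inverse_mul_inverse.
    + intros q [-> | ->]; cbn [psi].
      * eapply sandwich_E_sandwich; eauto using inverse_mul_inverse.
      * eapply sandwich_F_sandwich; eauto using inverse_mul_inverse.
Qed.

Lemma psi_idem g : inGamma g -> psi g * psi g = psi g.
Proof. intros Hg. apply (psi_idem_child Hg). Qed.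

Lemma psi_child_psi g q : inGamma g -> child q g -> psi g * psi q * psi g = psi g.
Proof. intros Hg. apply (psi_idem_child Hg). Qed.

Lemma psi_tri_bridge l c r : psi r * psi (tri l c r) * psi l = psi r * psi c * psi l.
Proof. cbn [psi]. eapply F_sandwich_E; eauto using mul_inverse_mul. Qed.

Section Triple.
Variables l c r : Gam X.
Hypothesis lcr_in : inGamma (tri l c r).

Let sandwich_hyps :
  psi c * psi c = psi c /\ psi l * psi c * psi l = psi l /\ psi r * psi c * psi r = psi r.
Proof.
  destruct lcr_in as [i Hi].
  destruct (inGam_tri_inv Hi) as (j & _ & Hl & Hc & Hr & _ & Hcl & Hcr).
  split; [|split]; [apply psi_idem | apply psi_child_psi | apply psi_child_psi];
    solve [assumption | eexists; eassumption].
Qed.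

Lemma psi_tri_absorb_l : psi c * psi l * psi (tri l c r) = psi (tri l c r).
Proof.
  destruct sandwich_hyps as (K & E & F). cbn [psi].
  eapply sandwich_KE_absorb; eauto.
Qed.

Lemma psi_tri_absorb_r : psi (tri l c r) * psi r * psi c = psi (tri l c r).
Proof.
  destruct sandwich_hyps as (K & E & F). cbn [psi].
  eapply sandwich_FK_absorb; eauto.
Qed.

Lemma psi_tri_rg_5 :
  psi r * psi c * psi (tri l c r) * psi c * psi l = psi r * psi c * psi l.
Proof.
  destruct sandwich_hyps as (K & E & F). cbn [psi].
  eapply FK_sandwich_KE; eauto using mul_inverse_mul.
Qed.

End Triple.

Lemma rgen_Psi a b : rgen a b -> Psi a = Psi b.
Proof.
  destruct 1 as [g _|g _|g Hg|g Hg|g Hg|g Hg]; cbn [Psi fold_right]; rewrite ?mul1_None_r;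
    try reflexivity.
  - now apply psi_idem.
  - destruct (height_ge2_tri Hg) as (l & c & r & -> & Hin). cbn [gl gc gr].
    rewrite mul1_assoc. now apply psi_tri_absorb_l.
  - destruct (height_ge2_tri Hg) as (l & c & r & -> & Hin). cbn [gl gc gr].
    rewrite mul1_assoc. now apply psi_tri_absorb_r.
  - destruct (height_ge2_tri Hg) as (l & c & r & -> & Hin). cbn [gl gc gr].
    rewrite !mul1_assoc. now apply psi_tri_rg_5.
Qed.

Lemma rho_Psi u v : rho u v -> Psi u = Psi v.
Proof.
  induction 1 as [| p q a b _ _ Hab | |]; try congruence.
  now rewrite !Psi_app, (rgen_Psi Hab).
Qed.

Lemma psi_neq_None g : proper g -> psi g <> None.
Proof.
  induction g as [|x|l IHl c _ r _]; intros [i Hi].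
  - apply inGam_height in Hi. discriminate.
  - discriminate.
  - destruct (inGam_tri_inv Hi) as (j & _ & Hl & _).
    cbn [psi]; unfold sandwich; intros H.
    apply (IHl (ex_intro _ j Hl)).
    repeat (apply mul1_eq_None in H as [H ?]). assumption.
Qed.

Lemma Psi_neq_None w : w <> [] -> Forall proper w -> Psi w <> None.
Proof.
  destruct w as [|g w]; intros Hw Hp; [contradiction|].
  inversion Hp as [|? ? Hg _]; subst. rewrite Psi_cons. intros H.
  apply mul1_eq_None in H as [H _]. now apply (psi_neq_None Hg).
Qed.

Lemma psi_eq_None g : inGamma g -> psi g = None -> g = one.
Proof.
  intros Hg H. destruct (inGamma_cases Hg) as [| Hp]; [assumption |].
  now apply psi_neq_None in H.
Qed.

Lemma Psi_last_idem a w : Forall proper (a :: w) -> Psi (a :: w) * psi (last w a) = Psi (a :: w).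
Proof.
  revert a; induction w as [|b w IH]; intros a Hw; inversion Hw; subst.
  - rewrite Psi_single. now apply psi_idem, proper_inGamma.
  - rewrite last_cons, Psi_cons, <- mul1_assoc, IH; [reflexivity | assumption].
Qed.

Lemma ascent_from_gen h : proper h ->
  exists x L, chain child (gen x :: L) /\ last L (gen x) = h /\ Psi (gen x :: L) = psi h.
Proof.
  induction h as [|x|l _ c IHc r _]; intros [i Hi].
  - apply inGam_height in Hi. discriminate.
  - exists x, []. split; [constructor; apply proper_gen | split; [reflexivity | apply Psi_single]].
  - set (t := tri l c r).
    assert (Ht : proper t) by now exists i.
    destruct (inGam_tri_inv Hi) as (j & _ & Hl & Hc & Hr & _ & Hcl & Hcr).
    assert (Hlt : child l t) by now left.
    destruct j as [|j].
    + simpl in Hl, Hc. destruct Hl as [x ->]. subst c.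
      exists x, [t]. split; [apply chain_cons; auto using chain_single, proper_gen |].
      split; [reflexivity |]. rewrite Psi_cons, Psi_single.
      apply (psi_tri_absorb_l (proper_inGamma Ht)).
    + destruct (IHc (ex_intro _ j Hc)) as (x & L & HL & Hlast & EL).
      exists x, (L ++ [l; t]). split; [|split].
      * apply chain_app; [exact HL | now rewrite Hlast |].
        apply chain_cons; auto using chain_single. now exists (S j).
      * change [l; t] with ([l] ++ [t]). now rewrite app_assoc, last_last.
      * change (gen x :: L ++ [l; t]) with ((gen x :: L) ++ [l; t]).
        rewrite Psi_app, EL, Psi_cons, Psi_single, mul1_assoc.
        apply (psi_tri_absorb_l (proper_inGamma Ht)).
Qed.

Lemma descent_to_gen g : proper g ->
  exists y d, chain parent (g :: d) /\ last d g = gen y /\ Psi (g :: d) = psi g.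
Proof.
  induction g as [|y|l _ c IHc r _]; intros [i Hi].
  - apply inGam_height in Hi. discriminate.
  - exists y, []. split; [constructor; apply proper_gen | split; [reflexivity | apply Psi_single]].
  - set (t := tri l c r).
    assert (Ht : proper t) by now exists i.
    destruct (inGam_tri_inv Hi) as (j & _ & Hl & Hc & Hr & _ & Hcl & Hcr).
    assert (Hrt : parent t r) by now right.
    destruct j as [|j].
    + simpl in Hr, Hc. destruct Hr as [y ->]. subst c.
      exists y, [gen y]. split; [apply chain_cons; auto using chain_single, proper_gen |].
      split; [reflexivity |]. rewrite Psi_cons, Psi_single.
      pose proof (psi_tri_absorb_r (proper_inGamma Ht)) as H. now rewrite mul1_None_r in H.
    + destruct (IHc (ex_intro _ j Hc)) as (y & d & Hd & Hlast & Ed).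
      exists y, (r :: c :: d). split; [|split].
      * apply chain_cons; [exact Ht | exact Hrt |].
        apply chain_cons; [now exists (S j) | exact Hcr | exact Hd].
      * now rewrite !last_cons.
      * rewrite 2!Psi_cons, Ed, mul1_assoc. apply (psi_tri_absorb_r (proper_inGamma Ht)).
Qed.

Lemma descent_mul_rev t d : chain parent (t :: d) -> psi t * Psi d * Psi (rev d) * psi t = psi t.
Proof.
  revert t; induction d as [|h d IH]; intros t Hd;
    inversion Hd as [? Ht | ? ? ? Ht Hth Hhd]; subst.
  - cbn. rewrite !mul1_None_r. now apply psi_idem, proper_inGamma.
  - specialize (IH h Hhd).
    change (Psi (h :: d)) with (psi h * Psi d). cbn [rev]. rewrite Psi_app, Psi_single.
    rw IH. now apply psi_child_psi; [apply proper_inGamma |].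
Qed.

Lemma mountain_regular m : mountain m -> Psi m * Psi (rev m) * Psi m = Psi m.
Proof.
  induction 1 as [m Hm | x p w Hx Hxp Hpw IH].
  - destruct m as [|t d]; [inversion Hm |].
    pose proof (descent_mul_rev Hm) as D.
    pose proof (psi_idem (proper_inGamma (Forall_inv (chain_proper Hm)))) as T.
    cbn [rev]. rewrite Psi_app, Psi_single, Psi_cons. rw T. rw D. reflexivity.
  - pose proof (mountain_proper Hpw) as Hp. inversion Hp as [|? ? Hpp _]; subst.
    pose proof (psi_idem (proper_inGamma Hx)) as Xi.
    pose proof (psi_idem (proper_inGamma Hpp)) as Pi.
    pose proof (psi_child_psi (proper_inGamma Hpp) Hxp) as PXP.
    cbn [rev] in *. rewrite !Psi_app, !Psi_single, !Psi_cons in *.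
    revert IH. rw Pi. rw Xi. rw PXP. intros IH. rw IH. reflexivity.
Qed.

Lemma mountain_cons_parent m r : mountain m -> proper r -> child (hd one m) r ->
  exists w, mountain (r :: w) /\ Psi (r :: w) = psi r * Psi m.
Proof.
  intros Hm; revert r; induction Hm as [m Hm | x p w Hx Hxp Hpw IH]; intros r Hr Hmr.
  - exists m. split; [| reflexivity].
    apply mountain_descent. destruct Hm; apply chain_cons; auto using chain_single, chain_cons.
  - pose proof (mountain_proper Hpw) as Hp. inversion Hp as [|? ? Hpp _]; subst.
    change (Psi (x :: p :: w)) with (psi x * (psi p * Psi w)).
    destruct (classic (p = r)) as [<- | Hpr].
    + exists w. split; [exact Hpw |].
      pose proof (psi_child_psi (proper_inGamma Hpp) Hxp) as PXP.
      rewrite !Psi_cons. rw PXP. reflexivity.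
    + set (t := tri p x r).
      assert (Ht : proper t) by now apply proper_tri.
      destruct (IH t Ht (or_introl eq_refl)) as (w1 & Hw1 & E1).
      exists (t :: w1). split; [apply mountain_climb; auto; now right |].
      pose proof (psi_tri_bridge p x r) as B. fold t in B.
      change (Psi (r :: t :: w1)) with (psi r * Psi (t :: w1)). rewrite E1.
      rewrite !Psi_cons. rw B. reflexivity.
Qed.

Lemma mountain_cons_descent g d w : chain parent (g :: d) -> mountain (last d g :: w) ->
  exists w', mountain (g :: w') /\ Psi (g :: w') = Psi (g :: d) * Psi (last d g :: w).
Proof.
  revert g; induction d as [|h d IH]; intros g Hd Hw.
  - exists w. split; [exact Hw |].
    pose proof (psi_idem (proper_inGamma (Forall_inv (chain_proper Hd)))) as G.
    cbn [last]. rewrite Psi_single. rewrite !Psi_cons. rw G. reflexivity.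
  - inversion Hd as [| ? ? ? Hg Hgh Hhd]; subst. rewrite last_cons in *.
    destruct (IH h Hhd Hw) as (w1 & Hw1 & E1).
    destruct (mountain_cons_parent Hw1 Hg Hgh) as (w2 & Hw2 & E2).
    exists w2. split; [exact Hw2 |].
    rewrite E2, E1. rewrite !Psi_cons. now rewrite mul1_assoc.
Qed.

Lemma mountain_cons_gen x y w : mountain (gen x :: w) ->
  exists w', mountain (gen y :: w') /\ Psi (gen y :: w') = psi (gen y) * Psi (gen x :: w).
Proof.
  intros Hw. destruct (classic (x = y)) as [<- | Hxy].
  - exists w. split; [exact Hw |].
    assert (G : psi (gen x) * psi (gen x) = psi (gen x)) by (simpl; now rewrite phi_idem).
    rewrite !Psi_cons. rw G. reflexivity.
  - set (t := tri (gen x) one (gen y)).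
    assert (Ht : proper t).
    { apply proper_tri; auto using proper_gen; try (now left); congruence. }
    destruct (mountain_cons_parent Hw Ht (or_introl eq_refl)) as (w1 & Hw1 & E1).
    exists (t :: w1). split; [apply mountain_climb; auto using proper_gen; now right |].
    pose proof (psi_tri_bridge (gen x) one (gen y)) as B. fold t in B.
    change (psi one) with (@None Sg) in B. rewrite mul1_None_r in B.
    change (Psi (gen y :: t :: w1)) with (psi (gen y) * Psi (t :: w1)). rewrite E1.
    rewrite !Psi_cons. rw B. reflexivity.
Qed.

Lemma mountain_cons g m : proper g -> mountain m ->
  exists m', mountain m' /\ Psi m' = psi g * Psi m.
Proof.
  intros Hg Hm. destruct m as [|h w]; [now apply mountain_nil in Hm |].
  destruct (ascent_from_gen (Forall_inv (mountain_proper Hm))) as (x & L & HL & HLh & EL).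
  rewrite <- HLh in Hm. pose proof (mountain_app_ascent HL Hm) as Hm1.
  destruct (descent_to_gen Hg) as (y & d & Hd & Hdy & Ed).
  destruct (mountain_cons_gen y Hm1) as (w2 & Hm2 & E2).
  rewrite <- Hdy in Hm2.
  destruct (mountain_cons_descent Hd Hm2) as (w3 & Hm3 & E3).
  exists (g :: w3). split; [exact Hm3 |].
  rewrite E3, Hdy, E2, mul1_assoc, <- Hdy, Psi_last_idem, Ed by exact (chain_proper Hd).
  change (gen x :: L ++ w) with ((gen x :: L) ++ w). now rewrite Psi_app, EL.
Qed.

Lemma Psi_eq_mountain u : Forall inGamma u -> Psi u <> None ->
  exists m, mountain m /\ Psi m = Psi u.
Proof.
  induction u as [|g u IH]; intros Hu Hne; [contradiction |].
  inversion Hu as [|? ? Hg Hu']; subst. rewrite Psi_cons in *.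
  destruct (inGamma_cases Hg) as [-> | Hgp]; [now apply IH |].
  destruct (Psi u) as [s|] eqn:Eu.
  - destruct (IH Hu' ltac:(discriminate)) as (m & Hm & <-). now apply mountain_cons.
  - exists [g]. split; [apply mountain_descent, chain_single, Hgp | reflexivity].
Qed.

Lemma Psi_regular u : Forall inGamma u -> Psi u <> None ->
  exists v, word v /\ Psi v <> None /\ Psi u * Psi v * Psi u = Psi u.
Proof.
  intros Hu Hne. destruct (Psi_eq_mountain Hu Hne) as (m & Hm & <-).
  assert (Hm' : rev m <> []) by (intros H; apply (f_equal (@rev _)) in H;
    rewrite rev_involutive in H; subst; now apply mountain_nil in Hm).
  pose proof (Forall_rev (mountain_proper Hm)) as Hp.
  exists (rev m). split; [| split; [now apply Psi_neq_None | now apply mountain_regular]].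
  split; [exact Hm' | eapply Forall_impl; [apply proper_inGamma | exact Hp]].
Qed.

Lemma rho_one_of_Psi_eq_None u : word u -> Psi u = None -> rho u [one].
Proof.
  intros [Hne Hu]. induction Hu as [|g u Hg Hu IH]; [contradiction|]. intros H.
  rewrite Psi_cons in H. apply mul1_eq_None in H as [Hg1 Hu1].
  rewrite (psi_eq_None Hg Hg1).
  destruct u as [|h u]; [apply rho_refl, word_one |].
  inversion Hu as [|? ? Hh _]; subst.
  apply rho_trans with (h :: u); [| apply IH; easy].
  exact (rho_step (p := []) (Forall_nil _) (Forall_inv_tail Hu) (rg_1l Hh)).
Qed.

Definition class_value (C : FT1 X) : option Sg :=
  Psi (proj1_sig (constructive_indefinite_description _ (proj2_sig C))).

Lemma class_value_cls C u : cls C u -> class_value C = Psi u.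
Proof.
  unfold class_value, cls. destruct (constructive_indefinite_description _ _) as [v Hv]; simpl.
  destruct Hv as [_ ->]. apply rho_Psi.
Qed.

Lemma Psi_neq_None_inFT C u : inFT C -> cls C u -> Psi u <> None.
Proof.
  intros HC Hu HP. apply HC. unfold cls in *. destruct (proj2_sig C) as (v & _ & E).
  rewrite E in *. apply rho_class_eq, rho_trans with u; [exact Hu |].
  exact (rho_one_of_Psi_eq_None (proj2 (rho_words Hu)) HP).
Qed.

Definition Psi_image : Sg -> Prop := fun s => exists u, word u /\ Psi u = Some s.

Lemma Psi_image_regular_subsemigroup : regular_subsemigroup mul Psi_image.
Proof.
  split.
  - intros a b (u & [Hu Hu'] & Ha) (v & [Hv Hv'] & Hb). exists (u ++ v). split.
    + split; [now destruct u | now apply Forall_app].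
    + now rewrite Psi_app, Ha, Hb.
  - intros a (u & Hu & Ha).
    destruct (Psi_regular (proj2 Hu) ltac:(congruence)) as (v & Hv & Hne & E).
    destruct (Psi v) as [b|] eqn:Eb; [| contradiction].
    exists b. split; [now exists v |]. rewrite Ha in E. now injection E.
Qed.

(* [class_value C] is [None] only for the class [1], which goes to the arbitrary [s0]. *)
Definition FT_hom (s0 : Sg) (C : FT1 X) : Sg :=
  match class_value C with Some s => s | None => s0 end.

Lemma FT_hom_mul s0 C D E : inFT C -> inFT D -> is_prod C D E ->
  FT_hom s0 E = mul (FT_hom s0 C) (FT_hom s0 D).
Proof.
  intros HC HD (u & v & Hu & Hv & Huv). unfold FT_hom.
  rewrite (class_value_cls Huv), (class_value_cls Hu), (class_value_cls Hv), Psi_app.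
  pose proof (Psi_neq_None_inFT HC Hu). pose proof (Psi_neq_None_inFT HD Hv).
  destruct (Psi u), (Psi v); easy.
Qed.

Lemma FT_hom_gen s0 x : FT_hom s0 (cls_gen x) = phi x.
Proof. unfold FT_hom. now rewrite (class_value_cls (u := [gen x])) by apply rho_refl, word_gen. Qed.

Lemma FT_hom_image s0 s : Psi_image s -> exists C, inFT C /\ FT_hom s0 C = s.
Proof.
  intros (u & Hu & Hs).
  exists (exist _ (rho u) (ex_intro _ u (conj Hu eq_refl))). split.
  - unfold inFT, cls; simpl. intros E.
    assert (H1 : rho u [one]) by (rewrite E; apply rho_refl, word_one).
    apply rho_Psi in H1. rewrite Hs in H1. discriminate.
  - unfold FT_hom. rewrite (class_value_cls (u := u)), Hs by now apply rho_refl. reflexivity.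
Qed.

End Psi.

Theorem proposition5p5 (X : Type) (HX : inhabited X)
  (S : Type) (mul : S -> S -> S) (Hassoc : associative_op mul)
  (Hreg : regular_sg mul) (phi : X -> S)
  (Hinj : forall x y, phi x = phi y -> x = y)
  (Hidem : forall x, idempotent mul (phi x))
  (Hgen : forall T : S -> Prop, regular_subsemigroup mul T ->
            (forall x, T (phi x)) -> forall s, T s) :
  exists psi : FT1 X -> S,
    (forall C D E : FT1 X, inFT C -> inFT D -> is_prod C D E ->
       psi E = mul (psi C) (psi D)) /\
    (forall s : S, exists C : FT1 X, inFT C /\ psi C = s) /\
    (forall x : X, psi (cls_gen x) = phi x).
Proof.
  destruct HX as [x0].
  exists (FT_hom Hreg phi (phi x0)). split; [| split].
  - exact (FT_hom_mul Hassoc Hreg Hidem (phi x0)).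
  - intros s. apply (FT_hom_image Hassoc Hidem).
    apply Hgen; [exact (Psi_image_regular_subsemigroup Hassoc Hreg Hidem) |].
    intros x. exists [gen x]. split; [apply word_gen | reflexivity].
  - exact (FT_hom_gen Hassoc Hreg Hidem (phi x0)).
Qed.
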